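(* Let $(R,\mathfrak{m})$ be a Noetherian local ring, let $f:M\to N$ be a homomorphism of finitely generated $R$-modules, and let $d=1+\mathrm{AR}(\mathfrak{m},\operatorname{im}(f)\subseteq N)$. Then for every $R$-linear map $\epsilon:M\to \mathfrak{m}^dN$, the initial module $(\ker(f+\epsilon))^*$ is a graded subquotient of $(\ker f)^*$, where both initial modules are computed inside $\mathrm{gr}_{\mathfrak{m}}(M)$.
   Context: For a Noetherian ring $R$, an ideal $I$ and finitely generated $R$-modules $N\subseteq M$, the Artin–Rees number $\mathrm{AR}(I,N\subseteq M)$ is the least integer $s$ such that $I^nM\cap N=I^{n-s}(I^sM\cap N)$ for all $n\ge s$. For a finitely generated $R$-module $M$, $\mathrm{gr}_{\mathfrak{m}}(M)=\bigoplus_{i\ge0}\mathfrak{m}^iM/\mathfrak{m}^{i+1}M$, a graded module over $\mathrm{gr}_{\mathfrak{m}}(R)=\bigoplus_{i\ge0}\mathfrak{m}^i/\mathfrak{m}^{i+1}$. For a submodule $L\subseteq M$, the initial module $L^*\subseteq \mathrm{gr}_{\mathfrak{m}}(M)$ is the kernel of the natural graded map $\mathrm{gr}_{\mathfrak{m}}(M)\to\mathrm{gr}_{\mathfrak{m}}(M/L)$; equivalently $L^*=\bigoplus_{i\ge0}(L\cap\mathfrak{m}^iM+\mathfrak{m}^{i+1}M)/\mathfrak{m}^{i+1}M$. ''Graded subquotient'' means that for every degree $p$, the degree-$p$ component of the first module is (as a $k=R/\mathfrak{m}$-vector space) a subquotient of the degree-$p$ component of the second. *)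

From HB Require Import structures.
From mathcomp Require Import all_boot all_order all_algebra.
Set Implicit Arguments. Unset Strict Implicit. Unset Printing Implicit Defensive.
Import GRing.Theory.
Local Open Scope ring_scope.

Section ModDefs.
Variable R : comNzRingType.

Definition gen (V : lmodType R) (S : V -> Prop) : V -> Prop :=
  fun x => exists (n : nat) (c : 'I_n -> R) (v : 'I_n -> V),
      (forall i, S (v i)) /\ x = \sum_(i < n) c i *: v i.

Definition is_submod (V : lmodType R) (S : V -> Prop) : Prop :=
  [/\ S 0, (forall x y, S x -> S y -> S (x + y)) & (forall r x, S x -> S (r *: x))].

Definition is_ideal (I : R -> Prop) : Prop :=
  [/\ I 0, (forall x y, I x -> I y -> I (x + y)) & (forall r x, I x -> I (r * x))].

Definition ideal_gen (S : R -> Prop) : R -> Prop :=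
  fun x => exists (n : nat) (c a : 'I_n -> R),
      (forall i, S (a i)) /\ x = \sum_(i < n) c i * a i.

Definition noetherian : Prop :=
  forall I : R -> Prop, is_ideal I ->
    exists (n : nat) (a : 'I_n -> R),
      forall x, I x <-> ideal_gen (fun y => exists i, y = a i) x.

Definition local_ring_max (m : R -> Prop) : Prop :=
  [/\ is_ideal m, ~ m 1 & forall x, ~ m x -> exists y, x * y = 1].

Definition fin_gen (V : lmodType R) : Prop :=
  exists (n : nat) (v : 'I_n -> V), forall x, gen (fun y => exists i, y = v i) x.

Fixpoint idpow (I : R -> Prop) (n : nat) : R -> Prop :=
  match n with
  | 0 => fun _ => True
  | n'.+1 => ideal_gen (fun y => exists a b, [/\ I a, idpow I n' b & y = a * b])
  end.

Definition idmul (V : lmodType R) (I : R -> Prop) (n : nat) (S : V -> Prop)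
  : V -> Prop :=
  gen (fun y => exists r x, [/\ idpow I n r, S x & y = r *: x]).

Definition idmulT (V : lmodType R) (I : R -> Prop) (n : nat) : V -> Prop :=
  idmul I n (fun _ : V => True).

Definition AR_holds (V : lmodType R) (I : R -> Prop) (N : V -> Prop) (s : nat)
  : Prop :=
  forall n, (s <= n)%N -> forall x,
    (idmulT I n x /\ N x) <-> idmul I (n - s) (fun y => idmulT I s y /\ N y) x.

Definition is_AR_number (V : lmodType R) (I : R -> Prop) (N : V -> Prop)
  (s : nat) : Prop :=
  AR_holds I N s /\ forall t, AR_holds I N t -> (s <= t)%N.

(* Degree-p component of the initial module L^* of L ⊆ V (w.r.t. m) is
   (L ∩ m^p V + m^(p+1) V) / m^(p+1) V.  We represent it by its numerator
   submodule of V: *)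
Definition init_num (V : lmodType R) (m : R -> Prop) (L : V -> Prop) (p : nat)
  : V -> Prop :=
  fun x => exists y z, [/\ L y, idmulT m p y, idmulT m p.+1 z & x = y + z].

(* Given submodules Q ⊆ W1 and Q ⊆ W2 of V, "W1/Q is a subquotient of W2/Q":
   there are submodules Q ⊆ B ⊆ A ⊆ W2 of V (so B/Q ⊆ A/Q ⊆ W2/Q) and an
   R-linear isomorphism A/B ≅ W1/Q, given by a map g on representatives:
   g maps A into W1, is R-linear modulo Q, has kernel B modulo Q, and is
   surjective modulo Q.  (Since m kills all these quotients, R-linearity is
   the same as k = R/m -linearity.) *)
Definition subquot_mod (V : lmodType R) (Q W1 W2 : V -> Prop) : Prop :=
  exists (A B : V -> Prop) (g : V -> V),
    is_submod A /\ is_submod B /\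
    (forall x, Q x -> B x) /\ (forall x, B x -> A x) /\ (forall x, A x -> W2 x) /\
    (forall x, A x -> W1 (g x)) /\
    (forall r x y, A x -> A y -> Q (g (r *: x + y) - (r *: g x + g y))) /\
    (forall x, A x -> (Q (g x) <-> B x)) /\
    (forall z, W1 z -> exists x, A x /\ Q (g x - z)).

Definition graded_subquot (V : lmodType R) (m : R -> Prop) (L1 L2 : V -> Prop)
  : Prop :=
  forall p : nat,
    subquot_mod (idmulT m p.+1) (init_num m L1 p) (init_num m L2 p).

End ModDefs.

(* If y lies in ker(f + eps) and in m^p M, then f y = - eps y lies in
   m^(p+ar+1) N ∩ im f, which by the Artin-Rees equality is
   m^(p+1) (m^ar N ∩ im f) ⊆ f (m^(p+1) M).  So f y = f x0 with x0 in
   m^(p+1) M, and y - x0 is an element of ker f ∩ m^p M with the same class as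
   y modulo m^(p+1) M.  Hence in every degree (ker(f + eps))^* is even
   contained in (ker f)^*, and an inclusion is a subquotient. *)
From HB Require Import structures.
From mathcomp Require Import all_boot all_order all_algebra.
Set Implicit Arguments.
Unset Strict Implicit.
Unset Printing Implicit Defensive.
Import GRing.Theory.
Local Open Scope ring_scope.

Section Submodules.
Variables (R : comNzRingType) (V : lmodType R).
Implicit Types (S P L Q : V -> Prop) (I : R -> Prop).

Lemma mem_gen S x : S x -> gen S x.
Proof.
move=> Sx; exists 1%N, (fun _ => 1), (fun _ => x); split=> //.
by rewrite big_ord1 scale1r.
Qed.

Lemma gen_submod S : is_submod (gen S).
Proof.
split.
- by exists 0%N, (fun _ => 0), (fun _ => 0); split=> [[]//|]; rewrite big_ord0.
- move=> x y [n1 [c1 [v1 [S1 ->]]]] [n2 [c2 [v2 [S2 ->]]]].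
  exists (n1 + n2)%N,
    (fun i => match split i with inl j => c1 j | inr j => c2 j end),
    (fun i => match split i with inl j => v1 j | inr j => v2 j end).
  split; first by move=> i; case: (split i).
  rewrite big_split_ord /=; congr (_ + _); apply: eq_bigr => i _.
  + by have := unsplitK (inl _ i : 'I_n1 + 'I_n2) => /= ->.
  + by have := unsplitK (inr _ i : 'I_n1 + 'I_n2) => /= ->.
- move=> r x [n [c [v [Sv ->]]]]; exists n, (fun i => r * c i), v; split=> //.
  by rewrite scaler_sumr; apply: eq_bigr => i _; rewrite scalerA.
Qed.

Lemma gen_min S P : is_submod P -> (forall x, S x -> P x) ->
  forall x, gen S x -> P x.
Proof. by move=> [P0 PD PZ] SP x [n [c [v [Sv ->]]]]; elim/big_ind: _ => //; auto. Qed.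

Lemma idmulT_submod I n : is_submod (@idmulT R V I n).
Proof. exact: gen_submod. Qed.

Lemma init_num_submod I L p : is_submod L -> is_submod (init_num I L p).
Proof.
move=> [L0 LD LZ]; have [P0 PD PZ] := idmulT_submod I p.
have [Q0 QD QZ] := idmulT_submod I p.+1.
split.
- by exists 0, 0; rewrite addr0.
- move=> _ _ [y1 [z1 [Ly1 Py1 Qz1 ->]]] [y2 [z2 [Ly2 Py2 Qz2 ->]]].
  by exists (y1 + y2), (z1 + z2); rewrite addrACA; split; auto.
- move=> r _ [y [z [Ly Py Qz ->]]].
  by exists (r *: y), (r *: z); rewrite scalerDr; split; auto.
Qed.

Lemma idmulT_sub_init_num I L p x :
  L 0 -> idmulT I p.+1 x -> init_num I L p x.
Proof.
move=> L0 Qx; exists 0, x; rewrite add0r; split=> //.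
by have [] := idmulT_submod I p.
Qed.

Lemma subquot_mod_sub Q (W1 W2 : V -> Prop) : is_submod Q -> is_submod W1 ->
  (forall x, Q x -> W1 x) -> (forall x, W1 x -> W2 x) -> subquot_mod Q W1 W2.
Proof.
move=> Qsub W1sub QW1 W12; have [Q0 _ _] := Qsub.
exists W1, Q, id; do 6!split=> //; split; last split.
- by move=> r x y _ _; rewrite subrr.
- by [].
- by move=> z W1z; exists z; rewrite subrr.
Qed.

Lemma init_num_graded_subquot I (L1 L2 : V -> Prop) : is_submod L1 ->
  (forall p x, init_num I L1 p x -> init_num I L2 p x) ->
  graded_subquot I L1 L2.
Proof.
move=> L1sub L12 p; have [L0 _ _] := L1sub.
apply: subquot_mod_sub; [exact: idmulT_submod | exact: init_num_submod | | exact: L12].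
by move=> x; exact: idmulT_sub_init_num.
Qed.

End Submodules.

Section IdealPowers.
Variable R : comNzRingType.
Implicit Type I : R -> Prop.

Lemma idpow_ideal I n : is_ideal (idpow I n).
Proof. by case: n => [|n] //=; exact: (@gen_submod R R^o). Qed.

Lemma ideal_min (S P : R -> Prop) :
  is_ideal P -> (forall x, S x -> P x) -> forall x, ideal_gen S x -> P x.
Proof. exact: (@gen_min R R^o). Qed.

Lemma idpow_mul I a b r s :
  idpow I a r -> idpow I b s -> idpow I (a + b) (r * s).
Proof.
elim: a r s => [|a IHa] r s Ir Is.
  by have [_ _ IZ] := idpow_ideal I b; exact: IZ.
have [G0 GD GZ] := idpow_ideal I (a + b).+1.
pose P r := forall s, idpow I b s -> idpow I (a + b).+1 (r * s).
suff : P r by apply.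
apply: ideal_min Ir => [|_ [c [t [Ic It ->]]] s' Is'].
- split=> [s' _|x y Px Py s' Is'|c x Px s' Is']; first by rewrite mul0r.
  + by rewrite mulrDl; apply: GD; [exact: Px|exact: Py].
  + by rewrite -mulrA; apply: GZ; exact: Px.
- apply: (@mem_gen R R^o); exists c, (t * s'); split=> //; [exact: IHa | by rewrite mulrA].
Qed.

Lemma idpowSW I n r : idpow I n.+1 r -> idpow I n r.
Proof.
have [_ _ GZ] := idpow_ideal I n.
by apply: ideal_min; [exact: idpow_ideal | move=> _ [c [t [_ It ->]]]; exact: GZ].
Qed.

Lemma idmulTSW (V : lmodType R) I n (x : V) : idmulT I n.+1 x -> idmulT I n x.
Proof.
apply: gen_min; first exact: idmulT_submod.
move=> _ [r [y [Ir _ ->]]]; apply: mem_gen; exists r, y; split=> //.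
exact: idpowSW.
Qed.

Lemma idmulT_scale (V : lmodType R) I p q r (w : V) :
  idpow I p r -> idmulT I q w -> idmulT I (p + q) (r *: w).
Proof.
move=> Ir; have [G0 GD GZ] := @idmulT_submod R V I (p + q).
apply: (@gen_min _ _ _ (fun w => idmulT I (p + q) (r *: w))).
- split=> [|x y Gx Gy|c x Gx]; first by rewrite scaler0.
  + by rewrite scalerDr; exact: GD.
  + by rewrite scalerA mulrC -scalerA; exact: GZ.
- move=> _ [s [z [Is _ ->]]]; apply: mem_gen; exists (r * s), z.
  by rewrite scalerA; split=> //; exact: idpow_mul.
Qed.

Lemma linear_idmulT (M N : lmodType R) (e : {linear M -> N}) I p q (x : M) :
  (forall y, idmulT I q (e y)) -> idmulT I p x -> idmulT I (p + q) (e x).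
Proof.
move=> Ie; have [G0 GD GZ] := @idmulT_submod R N I (p + q).
apply: (@gen_min _ _ _ (fun x => idmulT I (p + q) (e x))).
- split=> [|a b Ga Gb|c a Ga]; first by rewrite linear0.
  + by rewrite linearD; exact: GD.
  + by rewrite linearZ; exact: GZ.
- by move=> _ [s [z [Is _ ->]]]; rewrite linearZ; exact: idmulT_scale.
Qed.

End IdealPowers.

Section ArtinRees.
Variables (R : comNzRingType) (I : R -> Prop) (M N : lmodType R).
Variable f : {linear M -> N}.

Lemma ker_submod (g : {linear M -> N}) : is_submod (fun x => g x = 0).
Proof.
split=> [|x y gx gy|r x gx]; first exact: linear0.
- by rewrite linearD gx gy addr0.
- by rewrite linearZ_LR gx scaler0.
Qed.

Lemma idmul_im_preimage k (S : N -> Prop) w :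
  idmul I k (fun w => S w /\ exists x, w = f x) w ->
  exists x, idmulT I k x /\ w = f x.
Proof.
have [G0 GD GZ] := @idmulT_submod R M I k.
move: w; apply: gen_min.
- split=> [|_ _ [a [Ga ->]] [b [Gb ->]]|c _ [a [Ga ->]]].
  + by exists 0; rewrite linear0.
  + by exists (a + b); rewrite linearD; split=> //; exact: GD.
  + by exists (c *: a); rewrite linearZ; split=> //; exact: GZ.
- move=> _ [r [_ [Ir [_ [x ->]] ->]]]; exists (r *: x); rewrite linearZ.
  by split=> //; apply: mem_gen; exists r, x.
Qed.

Lemma AR_preimage s : AR_holds I (fun y => exists x, y = f x) s ->
  forall n x, idmulT I (n + s) (f x) ->
  exists x0, idmulT I n x0 /\ f x = f x0.
Proof.
move=> ARs n x Ifx.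
have := (ARs (n + s)%N (leq_addl n s) (f x)).1 (conj Ifx (ex_intro _ x erefl)).
by rewrite addnK; exact: idmul_im_preimage.
Qed.

Lemma init_num_ker_perturb (eps : {linear M -> N}) s p x :
  AR_holds I (fun y => exists x, y = f x) s ->
  (forall x, idmulT I s.+1 (eps x)) ->
  init_num I (fun x => f x + eps x = 0) p x -> init_num I (fun x => f x = 0) p x.
Proof.
move=> ARs Ieps [y [z [Ky Iy Iz ->]]].
have [P0 PD PZ] := @idmulT_submod R M I p.
have [_ _ NZ] := @idmulT_submod R N I (p + s.+1).
have fyE : f y = - eps y by apply/eqP; rewrite -addr_eq0 Ky.
have Ify : idmulT I (p.+1 + s) (f y).
  by rewrite addSnnS fyE -scaleN1r; apply: NZ; exact: linear_idmulT.
have [x0 [Ix0 fx0]] := AR_preimage ARs Ify.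
exists (y - x0), (z + x0); split.
- by rewrite linearB /= fx0 subrr.
- by apply: PD => //; rewrite -scaleN1r; apply: PZ; exact: idmulTSW.
- by have [_ QD _] := @idmulT_submod R M I p.+1; exact: QD.
- by rewrite addrACA addNr addr0.
Qed.

End ArtinRees.

Theorem corollary2p6 (R : comNzRingType) (m : R -> Prop)
  (M N : lmodType R) (f : {linear M -> N}) (ar : nat) :
  noetherian R -> local_ring_max m -> fin_gen M -> fin_gen N ->
  is_AR_number m (fun y : N => exists x : M, y = f x) ar ->
  forall eps : {linear M -> N},
    (forall x : M, idmulT m ar.+1 (eps x)) ->
    graded_subquot m (fun x : M => f x + eps x = 0) (fun x : M => f x = 0).
Proof.
move=> _ _ _ _ [ARar _] eps Ieps.
apply: init_num_graded_subquot; first exact: (ker_submod (f \+ eps)).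
by move=> p x; exact: init_num_ker_perturb ARar Ieps.
Qed.
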